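(* The generating function $$F_{(123,132)}(x,p,q,u,v,s,t)=\sum_{n\ge0}\ \sum_{\pi\in S_n(123,132)} x^n p^{\operatorname{asc}(\pi)}q^{\operatorname{des}(\pi)}u^{\operatorname{lrmax}(\pi)}v^{\operatorname{rlmax}(\pi)}s^{\operatorname{lrmin}(\pi)}t^{\operatorname{rlmin}(\pi)}$$ is equal to $$\frac{1 + q^2 s^2 v x^2 + s t u v x (1 + p t u x) - q s x \bigl(1 + p u v^2 x^2 s t(-1 + t)(-1 + u) + v (1 + p x + s t u x)\bigr)}{1 + q^2 s^2 v x^2 - q s x (1 + v + p v x)}.$$
   Context: For $n\ge 0$, $S_n$ denotes the set of permutations $\pi=\pi_1\cdots\pi_n$ of $[n]=\{1,\dots,n\}$ ($S_0$ consists of the empty permutation, for which all statistics are $0$). $\pi$ avoids a pattern $\tau\in S_k$ if no subsequence $\pi_{i_1}\cdots\pi_{i_k}$ ($i_1<\dots<i_k$) satisfies $\pi_{i_a}<\pi_{i_b}\iff\tau_a<\tau_b$; $S_n(\tau,\rho)$ is the set of permutations in $S_n$ avoiding both $\tau$ and $\rho$. $\operatorname{asc}(\pi)$ (resp. $\operatorname{des}(\pi)$) is the number of $i\in[n-1]$ with $\pi_i<\pi_{i+1}$ (resp. $\pi_i>\pi_{i+1}$). $\pi_i$ is a left-to-right maximum (resp. minimum) if it is larger (resp. smaller) than every $\pi_j$ with $j<i$, and a right-to-left maximum (resp. minimum) if it is larger (resp. smaller) than every $\pi_j$ with $j>i$; $\operatorname{lrmax},\operatorname{lrmin},\operatorname{rlmax},\operatorname{rlmin}$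 count these (so $\pi_1$ is always a left-to-right maximum and minimum, $\pi_n$ always a right-to-left maximum and minimum). *)

From HB Require Import structures.
From mathcomp Require Import all_boot all_order all_algebra all_fingroup.
Set Implicit Arguments. Unset Strict Implicit. Unset Printing Implicit Defensive.
Import GRing.Theory.

Definition pword n (sg : 'S_n) : seq nat := [seq val (sg i) | i <- enum 'I_n].

Definition same_pattern (s tau : seq nat) : bool :=
  (size s == size tau) &&
  [forall i : 'I_(size s), forall j : 'I_(size s),
     (nth 0 s i < nth 0 s j) == (nth 0 tau i < nth 0 tau j)].

Definition contains (w tau : seq nat) : bool :=
  [exists m : (size w).-tuple bool, same_pattern (mask m w) tau].

Definition avoids (w tau : seq nat) : bool := ~~ contains w tau.

Definition asc (w : seq nat) : nat :=
  \sum_(i < (size w).-1) (nth 0 w i < nth 0 w i.+1).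
Definition des (w : seq nat) : nat :=
  \sum_(i < (size w).-1) (nth 0 w i > nth 0 w i.+1).
Definition lrmax (w : seq nat) : nat :=
  \sum_(i < size w) all (fun j => nth 0 w j < nth 0 w i) (iota 0 i).
Definition lrmin (w : seq nat) : nat :=
  \sum_(i < size w) all (fun j => nth 0 w j > nth 0 w i) (iota 0 i).
Definition rlmax (w : seq nat) : nat :=
  \sum_(i < size w) all (fun j => nth 0 w j < nth 0 w i) (iota i.+1 (size w - i.+1)).
Definition rlmin (w : seq nat) : nat :=
  \sum_(i < size w) all (fun j => nth 0 w j > nth 0 w i) (iota i.+1 (size w - i.+1)).

(* Coefficient of x^n in F_{(123,132)}, with p,q,u,v,s,t in a commutative ring *)
Definition Fcoef (R : comRingType) (p q u v s t : R) (n : nat) : R :=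
  \sum_(sg : 'S_n | avoids (pword sg) [:: 0; 1; 2] && avoids (pword sg) [:: 0; 2; 1])
     p ^+ asc (pword sg) * q ^+ des (pword sg) * u ^+ lrmax (pword sg)
     * v ^+ rlmax (pword sg) * s ^+ lrmin (pword sg) * t ^+ rlmin (pword sg).

From HB Require Import structures.
From mathcomp Require Import all_boot all_order all_algebra all_fingroup.
From mathcomp Require Import zify ring.
Import GRing.Theory.

Set Implicit Arguments.
Unset Strict Implicit.
Unset Printing Implicit Defensive.

(* A permutation avoids 123 and 132 iff every entry has at most one larger
   entry to its right, i.e. iff each entry is the largest or the second
   largest of the entries not yet read.  So an avoider of length k+2 starts
   either with its maximum, followed by an avoider of length k+1, or with its
   second largest value, followed by an avoider of length k+1 whose maximum is
   renamed to exceed it.  Tracking the six statistics through these two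
   insertions, the weight sums a_k, b_k of the two kinds satisfy
   (a, b)_(k+1) = M (a, b)_k with M = [[qvs, qvs], [p, qs]], and
   F_(k+2) = u a_k + u^2 b_k.  By Cayley-Hamilton F_n then satisfies, for
   n >= 4, the recurrence with characteristic polynomial
   1 - tr(M) X + det(M) X^2, which is the denominator; the numerator is read
   off F_0, ..., F_3. *)

Section Records.
Variable r : rel nat.

Fixpoint rises (w : seq nat) : nat :=
  if w is x :: w' then (if w' is y :: _ then r x y else false) + rises w' else 0.

Fixpoint lr_records (b : pred nat) (w : seq nat) : nat :=
  if w is x :: w' then b x + lr_records (fun y => b y && r x y) w' else 0.

Fixpoint rl_records (w : seq nat) : nat :=
  if w is x :: w' then all (r^~ x) w' + rl_records w' else 0.

Lemma risesE w : rises w = \sum_(i < (size w).-1) r (nth 0 w i) (nth 0 w i.+1).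
Proof.
elim: w => [|x w IH]; first by rewrite big_ord0.
case: w IH => [|y w] IH; first by rewrite big_ord0.
by rewrite -[LHS]/(r x y + rises (y :: w)) IH big_ord_recl.
Qed.

Lemma lr_recordsE b w : lr_records b w =
  \sum_(i < size w)
     (b (nth 0 w i) && all (fun j => r (nth 0 w j) (nth 0 w i)) (iota 0 i)).
Proof.
elim: w b => [|x w IH] b /=; first by rewrite big_ord0.
rewrite big_ord_recl /= andbT IH; congr (_ + _); apply: eq_bigr => i _.
by rewrite /bump /= -add1n iotaDl all_map andbA.
Qed.

Lemma rl_recordsE w : rl_records w =
  \sum_(i < size w)
     all (fun j => r (nth 0 w j) (nth 0 w i)) (iota i.+1 (size w - i.+1)).
Proof.
elim: w => [|x w IH] /=; first by rewrite big_ord0.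
rewrite big_ord_recl IH subn1 /= -add1n iotaDl all_map; congr (_ + _).
  by rewrite -[in LHS](mkseq_nth 0 w) all_map.
apply: eq_bigr => i _.
by rewrite /bump /= add0n add1n subSS -[i.+2]/(1 + i.+1) iotaDl all_map.
Qed.

Lemma eq_in_lr_records b1 b2 w :
  {in w, b1 =1 b2} -> lr_records b1 w = lr_records b2 w.
Proof.
elim: w b1 b2 => [|x w IH] b1 b2 //= eq_b.
rewrite eq_b ?mem_head //; congr (_ + _); apply: IH => y w_y /=.
by rewrite eq_b // inE w_y orbT.
Qed.

Lemma lr_records_pred0 b w : {in w, forall y, ~~ b y} -> lr_records b w = 0.
Proof.
elim: w b => [|x w IH] b //= not_b.
rewrite (negbTE (not_b x (mem_head x w))) IH // => y w_y.
by rewrite negb_and not_b // inE w_y orbT.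
Qed.

Variable f : nat -> nat.

Lemma rises_map w : {in w &, {mono f : a b / r a b}} -> rises (map f w) = rises w.
Proof.
elim: w => [|x w IH] //= f_mono.
rewrite IH; last by move=> a b wa wb; rewrite f_mono // inE ?wa ?wb orbT.
by case: w f_mono {IH} => [|y w] //= f_mono; rewrite f_mono ?inE ?eqxx ?orbT.
Qed.

Lemma rl_records_map w :
  {in w &, {mono f : a b / r a b}} -> rl_records (map f w) = rl_records w.
Proof.
elim: w => [|x w IH] //= f_mono.
rewrite IH; last by move=> a b wa wb; rewrite f_mono // inE ?wa ?wb orbT.
congr (nat_of_bool _ + _); rewrite all_map; apply: eq_in_all => y w_y /=.
by rewrite f_mono ?inE ?eqxx ?w_y ?orbT.
Qed.

Lemma lr_records_map b w : {in w &, {mono f : a b / r a b}} ->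
  lr_records b (map f w) = lr_records (b \o f) w.
Proof.
elim: w b => [|x w IH] b //= f_mono; congr (_ + _).
rewrite IH; last by move=> a c wa wc; rewrite f_mono // inE ?wa ?wc orbT.
by apply: eq_in_lr_records => y w_y /=; rewrite f_mono ?inE ?eqxx ?w_y ?orbT.
Qed.

End Records.

Lemma lr_records_ltn_max m w :
  m \in w -> all (fun y => y <= m) w -> lr_records ltn (pred1 m) w = 1.
Proof.
elim: w => [|x w IH] //= w_m /andP [x_le_m w_le_m].
have [->|x_neq_m] := eqVneq x m.
  by rewrite lr_records_pred0 // => y _; case: eqP => // ->; rewrite ltnn.
have w_m' : m \in w by move: w_m; rewrite inE eq_sym (negbTE x_neq_m).
rewrite -[RHS](IH w_m' w_le_m); apply: eq_in_lr_records => y _ /=.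
by case: eqP => // ->; lia.
Qed.

Lemma lr_records_gtn_head_max m y w : y <= m ->
  lr_records gtn predT (y :: w) = (y == m) + lr_records gtn (fun z => z < m) (y :: w).
Proof.
move=> y_le_m /=; have [->|y_neq_m] := eqVneq y m.
  by rewrite ltnn; congr (_ + _); apply: eq_in_lr_records => z _ /=; rewrite andbb.
have y_lt_m : y < m by lia.
rewrite y_lt_m; congr (_ + _); apply: eq_in_lr_records => z _ /=.
by apply/idP/andP => [z_lt_y|[]//]; split=> //; lia.
Qed.

Lemma asc_rises w : asc w = rises ltn w.
Proof. by rewrite risesE. Qed.
Lemma des_rises w : des w = rises gtn w.
Proof. by rewrite risesE. Qed.
Lemma lrmax_records w : lrmax w = lr_records ltn predT w.
Proof. by rewrite lr_recordsE. Qed.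
Lemma lrmin_records w : lrmin w = lr_records gtn predT w.
Proof. by rewrite lr_recordsE. Qed.
Lemma rlmax_records w : rlmax w = rl_records ltn w.
Proof. by rewrite rl_recordsE. Qed.
Lemma rlmin_records w : rlmin w = rl_records gtn w.
Proof. by rewrite rl_recordsE. Qed.

Lemma asc_cons2 x y w : asc [:: x, y & w] = (x < y) + asc (y :: w).
Proof. by rewrite !asc_rises. Qed.
Lemma des_cons2 x y w : des [:: x, y & w] = (y < x) + des (y :: w).
Proof. by rewrite !des_rises. Qed.
Lemma lrmax_cons x w : lrmax (x :: w) = (lr_records ltn (fun y => x < y) w).+1.
Proof. by rewrite !lrmax_records. Qed.
Lemma lrmin_cons x w : lrmin (x :: w) = (lr_records gtn (fun y => y < x) w).+1.
Proof. by rewrite !lrmin_records. Qed.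
Lemma rlmax_cons x w : rlmax (x :: w) = all (fun y => y < x) w + rlmax w.
Proof. by rewrite !rlmax_records. Qed.
Lemma rlmin_cons x w : rlmin (x :: w) = all (fun y => x < y) w + rlmin w.
Proof. by rewrite !rlmin_records. Qed.

Section OrderPreservingRelabelling.
Variables (f : nat -> nat) (w : seq nat).
Hypothesis f_mono : {in w &, {mono f : a b / a < b}}.

Let f_mono_gtn : {in w &, {mono f : a b / gtn a b}}.
Proof. by move=> a b wa wb; apply: f_mono. Qed.

Lemma asc_map : asc (map f w) = asc w.
Proof. by rewrite !asc_rises rises_map. Qed.
Lemma des_map : des (map f w) = des w.
Proof. by rewrite !des_rises rises_map. Qed.
Lemma rlmax_map : rlmax (map f w) = rlmax w.
Proof. by rewrite !rlmax_records rl_records_map. Qed.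
Lemma rlmin_map : rlmin (map f w) = rlmin w.
Proof. by rewrite !rlmin_records rl_records_map. Qed.

End OrderPreservingRelabelling.

(** * Inserting a maximal or submaximal first entry *)

(* On words with entries at most k this just renames k into k.+1; it is
   taken to be the full transposition so that it is its own inverse. *)
Definition swap_succ k y := if y == k then k.+1 else if y == k.+1 then k else y.

Lemma swap_succK k : involutive (swap_succ k).
Proof. by move=> y; rewrite /swap_succ; do 4?case: eqP => //=; lia. Qed.

Lemma swap_succ_mono k : {in [pred y | y <= k] &, {mono swap_succ k : a b / a < b}}.
Proof. by move=> a b; rewrite !inE /swap_succ; do 4?case: eqP => //=; lia. Qed.

Lemma perm_iota_le w k : perm_eq w (iota 0 k.+1) -> {in w, forall y, y <= k}.
Proof. by move=> w_perm y; rewrite (perm_mem w_perm) mem_iota. Qed.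

Lemma lrmax_cons_max n w : all (fun y => y < n) w -> lrmax (n :: w) = 1.
Proof.
move=> /allP w_lt_n; rewrite lrmax_cons lr_records_pred0 // => y /w_lt_n.
by rewrite -leqNgt => /ltnW.
Qed.

Lemma lrmax_cons_submax k w : perm_eq w (iota 0 k.+1) ->
  lrmax (k :: map (swap_succ k) w) = 2.
Proof.
move=> w_perm; have w_le_k := perm_iota_le w_perm.
rewrite lrmax_cons lr_records_map; last first.
  by move=> a b /w_le_k ka /w_le_k kb; apply: swap_succ_mono.
rewrite (@eq_in_lr_records _ _ (pred1 k)) ?lr_records_ltn_max //.
- by rewrite (perm_mem w_perm) mem_iota add0n ltnSn.
- by apply/allP.
by move=> y /w_le_k; rewrite /= /swap_succ; do 2?case: eqP => //; lia.
Qed.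

Section SubmaxInsertion.
Variables (k y : nat) (w : seq nat).
Hypothesis yw_perm : perm_eq (y :: w) (iota 0 k.+1).
Local Notation ws := (map (swap_succ k) (y :: w)).

Let le_k := perm_iota_le yw_perm.

Let y_le_k : y <= k.
Proof. by apply: le_k; rewrite mem_head. Qed.

Let sw_mono : {in y :: w &, {mono swap_succ k : a b / a < b}}.
Proof. by move=> a b /le_k ka /le_k kb; apply: swap_succ_mono. Qed.

Lemma asc_cons_submax : asc (k :: ws) = (y == k) + asc (y :: w).
Proof.
rewrite [ws]/= asc_cons2 -[_ :: map _ _]/ws asc_map //; congr (_ + _).
by rewrite /swap_succ; do 2?case: eqP => //; lia.
Qed.

Lemma des_cons_submax : des (k :: ws) = (y != k) + des (y :: w).
Proof.
rewrite [ws]/= des_cons2 -[_ :: map _ _]/ws des_map //; congr (_ + _).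
by rewrite /swap_succ; do 2?case: eqP => //; lia.
Qed.

Lemma rlmax_cons_submax : rlmax (k :: ws) = rlmax (y :: w).
Proof.
rewrite rlmax_cons rlmax_map // (_ : all _ ws = false) //.
have k_in : k \in y :: w by rewrite (perm_mem yw_perm) mem_iota add0n ltnSn.
have ws_k1 : k.+1 \in ws by apply/mapP; exists k; rewrite // /swap_succ eqxx.
by apply/negbTE/allP => /(_ _ ws_k1); rewrite ltnNge leqnSn.
Qed.

Lemma rlmin_cons_submax : rlmin (k :: ws) = (k == 0) + rlmin (y :: w).
Proof.
rewrite rlmin_cons rlmin_map //; congr (nat_of_bool _ + _).
have zero_in : 0 \in y :: w by rewrite (perm_mem yw_perm) mem_iota.
rewrite all_map; apply/allP/eqP => [/(_ 0 zero_in)|k0 z /le_k].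
  by rewrite /= /swap_succ; do 2?case: eqP => //; lia.
by rewrite /= /swap_succ k0; case: z.
Qed.

Lemma lrmin_cons_submax : lrmin (k :: ws) + (y == k) = (lrmin (y :: w)).+1.
Proof.
rewrite lrmin_cons lrmin_records (lr_records_gtn_head_max w y_le_k) addSn addnC.
rewrite lr_records_map; last by move=> a b wa wb; apply: sw_mono.
congr (_ + _).+1; apply: eq_in_lr_records => z /le_k z_le_k /=.
by rewrite /swap_succ; do 2?case: eqP => //; lia.
Qed.

End SubmaxInsertion.

Section Weight.
Variables (R : comPzRingType) (p q v s t : R).

(* u is left out: lrmax is 1 or 2 according to the first entry
   (lrmax_cons_max, lrmax_cons_submax), so it factors out of the sums. *)
Definition weight w :=
  (p ^+ asc w * q ^+ des w * v ^+ rlmax w * s ^+ lrmin w * t ^+ rlmin w)%R.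

Lemma weight_cons_max n w : all (fun y => y < n) w -> w != [::] ->
  weight (n :: w) = (q * v * s * weight w)%R.
Proof.
case: w => [|y w] // w_lt_n _; have /andP [y_lt_n _] := w_lt_n.
have n_gt_y : (n < y) = false by rewrite ltnNge ltnW.
have asc_nw : asc (n :: y :: w) = asc (y :: w) by rewrite asc_cons2 n_gt_y.
have des_nw : des (n :: y :: w) = (des (y :: w)).+1 by rewrite des_cons2 y_lt_n.
have rlmax_nw : rlmax (n :: y :: w) = (rlmax (y :: w)).+1.
  by rewrite rlmax_cons w_lt_n.
have lrmin_nw : lrmin (n :: y :: w) = (lrmin (y :: w)).+1.
  rewrite lrmin_cons lrmin_records; congr _.+1.
  by apply: eq_in_lr_records => z /(allP w_lt_n).
have rlmin_nw : rlmin (n :: y :: w) = rlmin (y :: w) by rewrite rlmin_cons /= n_gt_y.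
by rewrite /weight asc_nw des_nw rlmax_nw lrmin_nw rlmin_nw !exprS; ring.
Qed.

Lemma weight_cons_submax k w : perm_eq w (iota 0 k.+1) ->
  weight (k :: map (swap_succ k) w) =
    ((if head 0 w == k then p else q * s) * t ^+ (k == 0) * weight w)%R.
Proof.
case: w => [|y w] w_perm; first by have := perm_size w_perm.
have := lrmin_cons_submax w_perm.
rewrite /weight asc_cons_submax // des_cons_submax // rlmax_cons_submax //.
rewrite rlmin_cons_submax // [head _ _]/= !exprD.
have [->|y_neq_k] := eqVneq y k; first by rewrite addn1 => -[->]; ring.
by rewrite addn0 => ->; rewrite exprS; ring.
Qed.

End Weight.

(** * Avoiding 123 and 132 *)

Lemma forall_ord3 (P : pred 'I_3) :
  [forall i, P i] = [&& P (inord 0), P (inord 1) & P (inord 2)].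
Proof.
apply/forallP/and3P => [P_all|[P0 P1 P2] [[|[|[|i]]] lt_i3]] //;
  [move: P0 | move: P1 | move: P2].
all: by congr (is_true (P _)); apply: val_inj; rewrite /= inordK.
Qed.

Lemma same_pattern_1xx a b c :
  same_pattern [:: a; b; c] [:: 0; 1; 2] || same_pattern [:: a; b; c] [:: 0; 2; 1] =
  [&& a < b, a < c & b != c].
Proof.
rewrite /same_pattern /= !forall_ord3 /= !inordK //= !ltnn.
by case: (ltngtP a b); case: (ltngtP a c); case: (ltngtP b c).
Qed.

Lemma containsP w tau :
  reflect (exists2 s, subseq s w & same_pattern s tau) (contains w tau).
Proof.
apply: (iffP existsP) => [[m pat_m]|[s /subseqP [m size_m ->] pat_s]].
  by exists (mask m w); rewrite ?mask_subseq.
have size_m' : size m == size w by rewrite size_m.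
by exists (Tuple size_m').
Qed.

Fixpoint contains_1xx (w : seq nat) : bool :=
  if w is x :: w' then (1 < count (fun y => x < y) w') || contains_1xx w' else false.

Lemma contains_1xxP w :
  reflect (exists a b c, [/\ subseq [:: a; b; c] w, a < b & a < c]) (contains_1xx w).
Proof.
elim: w => [|x w IH] /=; first by right=> -[a [b [c []]]].
apply: (iffP orP) => [[two_above|/IH [a [b [c [sub_w ab ac]]]]]|[a [b [c []]]]].
- have: 1 < size [seq y <- w | x < y] by rewrite size_filter.
  have sub_w := filter_subseq (fun y => x < y) w.
  have above := filter_all (fun y => x < y) w.
  case: [seq y <- w | x < y] sub_w above => [|b [|c s]] // sub_w /and3P [xb xc _] _.
  exists x, b, c; split=> //=; rewrite eqxx; apply: subseq_trans sub_w.
  by rewrite /= !eqxx sub0seq.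
- by exists a, b, c; split=> //; apply: subseq_trans sub_w (subseq_cons w x).
rewrite /=; case: eqVneq => [<- sub_w ab ac|_ sub_w ab ac].
  left; rewrite -size_filter; apply: (@size_subseq _ [:: b; c]).
  by rewrite subseq_filter /= ab ac.
by right; apply/IH; exists a, b, c.
Qed.

Lemma contains_123_132 w : uniq w ->
  contains w [:: 0; 1; 2] || contains w [:: 0; 2; 1] = contains_1xx w.
Proof.
move=> w_uniq; apply/idP/contains_1xxP => [|[a [b [c [sub_w ab ac]]]]].
  move=> /orP w_pat; have [s sub_w] : exists2 s, subseq s w &
      same_pattern s [:: 0; 1; 2] || same_pattern s [:: 0; 2; 1].
    by case: w_pat => /containsP [s sub_w pat]; exists s; rewrite ?pat ?orbT.
  case: s sub_w => [|a [|b [|c [|d s]]]] sub_w //.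
  by rewrite same_pattern_1xx => /and3P [ab ac _]; exists a, b, c.
have := subseq_uniq sub_w w_uniq; rewrite /= !inE => /and3P [_ bc _].
have : [&& a < b, a < c & b != c] by rewrite ab ac.
rewrite -same_pattern_1xx => /orP [] pat; apply/orP; [left | right].
all: by apply/containsP; exists [:: a; b; c].
Qed.

Lemma contains_1xx_map f w : {in w &, {mono f : a b / a < b}} ->
  contains_1xx (map f w) = contains_1xx w.
Proof.
elim: w => [|x w IH] //= f_mono.
rewrite IH; last by move=> a b wa wb; rewrite f_mono // inE ?wa ?wb orbT.
congr (leq 2 _ || _); rewrite count_map; apply: eq_in_count => y w_y /=.
by rewrite f_mono ?inE ?eqxx ?w_y ?orbT.
Qed.

Fixpoint avoiders n : seq (seq nat) :=
  if n is m.+1 then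
    map (cons m) (avoiders m) ++
    (if m is k.+1 then map (fun w => k :: map (swap_succ k) w) (avoiders m) else [::])
  else [:: [::]].

Lemma avoiders_SS k : avoiders k.+2 =
  map (cons k.+1) (avoiders k.+1) ++ map (fun w => k :: map (swap_succ k) w) (avoiders k.+1).
Proof. by []. Qed.

Lemma count_gt_iota x n : count (fun y => x < y) (iota 0 n) = n - x.+1.
Proof. by elim: n => [|n IH] //; rewrite -[n.+1]addn1 iotaD count_cat IH /=; lia. Qed.

Lemma perm_iotaS n : perm_eq (n :: iota 0 n) (iota 0 n.+1).
Proof. by rewrite -[n.+1]addn1 iotaD /= -cat1s perm_catC. Qed.

Lemma perm_iota_swap k :
  perm_eq (k :: map (swap_succ k) (iota 0 k.+1)) (iota 0 k.+2).
Proof.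
have fix_lt_k : map (swap_succ k) (iota 0 k) = iota 0 k.
  by apply: map_id_in => y; rewrite mem_iota /swap_succ; do 2?case: eqP => //; lia.
rewrite -addn2 -[k.+1]addn1 !iotaD map_cat fix_lt_k /= /swap_succ eqxx.
by rewrite -cat1s perm_catCA.
Qed.

Lemma perm_swap_tail k w :
  perm_eq (k :: w) (iota 0 k.+2) -> perm_eq (map (swap_succ k) w) (iota 0 k.+1).
Proof.
move=> kw_perm; have : perm_eq w (map (swap_succ k) (iota 0 k.+1)).
  by rewrite -(perm_cons k) (perm_trans kw_perm) // perm_sym perm_iota_swap.
by move/(perm_map (swap_succ k)); rewrite (mapK (swap_succK k)).
Qed.

Lemma avoiders_perm n w : w \in avoiders n -> perm_eq w (iota 0 n).
Proof.
elim: n w => [|m IH] w /=; first by rewrite inE => /eqP ->.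
rewrite mem_cat => /orP [/mapP [v /IH v_perm ->]|].
  by apply: perm_trans (perm_iotaS m); rewrite perm_cons.
case: m IH => [|k] IH //; case/mapP => v /IH v_perm ->.
by apply: perm_trans (perm_iota_swap k); rewrite perm_cons; apply: perm_map.
Qed.

Lemma mem_map_cons (x y : nat) L w :
  (y :: w \in map (cons x) L) = (y == x) && (w \in L).
Proof.
by apply/mapP/andP => [[v v_L [-> ->]]|[/eqP -> w_L]]; [rewrite eqxx | exists w].
Qed.

Lemma mem_map_cons_swap k L y w :
  (y :: w \in map (fun v => k :: map (swap_succ k) v) L) =
  (y == k) && (map (swap_succ k) w \in L).
Proof.
rewrite (map_comp (cons k) (map (swap_succ k))) mem_map_cons.
by rewrite -{1}(mapK (swap_succK k) w) mem_map //; apply/inj_map/inv_inj/swap_succK.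
Qed.

Lemma mem_avoiders n w :
  perm_eq w (iota 0 n) -> (w \in avoiders n) = ~~ contains_1xx w.
Proof.
elim: n w => [|m IH] [|x w] w_perm //=; try by have := perm_size w_perm.
have x_le_m : x <= m.
  by have := mem_head x w; rewrite (perm_mem w_perm) mem_iota; lia.
have count_x : count (fun y => x < y) w = m - x.
  by have := seq.permP w_perm (fun y => x < y); rewrite count_gt_iota /= ltnn; lia.
rewrite mem_cat mem_map_cons count_x.
have [x_m | x_neq_m] := eqVneq x m.
  rewrite x_m in w_perm *; rewrite subnn IH //=.
    case: m {IH w_perm x_le_m count_x x_m} => [|k]; first by rewrite orbF.
    by rewrite mem_map_cons_swap (_ : (k.+1 == k) = false) ?orbF //; lia.
  by rewrite -(perm_cons m) (perm_trans w_perm) // perm_sym perm_iotaS.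
case: m IH w_perm x_le_m count_x x_neq_m => [|k] IH w_perm x_le_m count_x x_neq_m.
  by move: x_le_m x_neq_m; rewrite leqn0 => ->.
rewrite andFb orFb mem_map_cons_swap.
have [x_k | x_neq_k] := eqVneq x k; last by rewrite (_ : 1 < k.+1 - x) //; lia.
rewrite x_k subSn // subnn /= in w_perm *.
have sw_perm := perm_swap_tail w_perm; have le_k := perm_iota_le sw_perm.
rewrite IH // -[in RHS](mapK (swap_succK k) w) [in RHS]contains_1xx_map //.
by move=> a b /le_k ka /le_k kb; apply: swap_succ_mono.
Qed.

Lemma avoiders_uniq n : uniq (avoiders n).
Proof.
elim: n => [|[|k] IH] //.
have cons_inj : injective (cons k.+1) by move=> v v' [].
have cons_swap_inj : injective (fun v => k :: map (swap_succ k) v).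
  by move=> v v' [] /(congr1 (map (swap_succ k))); rewrite !(mapK (swap_succK k)).
rewrite avoiders_SS cat_uniq !map_inj_uniq // IH andbT /=.
by apply/hasP => -[_ /mapP [v _ ->] /mapP [v' _ [/eqP]]]; rewrite ltn_eqF.
Qed.

Lemma avoiders_nonempty n w : w \in avoiders n.+1 -> w != [::].
Proof. by move=> /avoiders_perm /perm_size; rewrite size_iota; case: w. Qed.

Lemma avoiders_lt n w : w \in avoiders n -> all (fun y => y < n) w.
Proof.
by move=> /avoiders_perm w_perm; apply/allP => y; rewrite (perm_mem w_perm) mem_iota.
Qed.

Lemma pword_uniq n (sg : 'S_n) : uniq (pword sg).
Proof. by rewrite map_inj_uniq ?enum_uniq // => i j /val_inj /perm_inj. Qed.

Lemma pword_perm n (sg : 'S_n) : perm_eq (pword sg) (iota 0 n).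
Proof.
apply: uniq_perm (pword_uniq sg) (iota_uniq 0 n) _ => x.
rewrite mem_iota /=; apply/mapP/idP => [[i _ ->] | x_lt_n]; first exact: ltn_ord.
by exists (sg^-1 (Ordinal x_lt_n))%g; rewrite ?mem_enum // permKV.
Qed.

Lemma nth_pword n (sg : 'S_n) (i : 'I_n) : nth 0 (pword sg) i = sg i.
Proof. by rewrite /pword (nth_map i) ?size_enum_ord // nth_ord_enum. Qed.

Lemma pword_inj n : injective (@pword n).
Proof.
move=> s1 s2 eq_w; apply/permP => i; apply: val_inj.
by have := congr1 (nth 0 ^~ i) eq_w; rewrite /= !nth_pword.
Qed.

Lemma pword_onto n w : perm_eq w (iota 0 n) -> exists sg : 'S_n, pword sg = w.
Proof.
move=> w_perm; have size_w : size w = n by rewrite (perm_size w_perm) size_iota.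
have w_lt_n (i : 'I_n) : nth 0 w i < n.
  have : nth 0 w i \in iota 0 n by rewrite -(perm_mem w_perm) mem_nth ?size_w.
  by rewrite mem_iota.
have w_uniq : uniq w by rewrite (perm_uniq w_perm) iota_uniq.
have f_inj : injective (fun i => Ordinal (w_lt_n i)).
  by move=> i j [/eqP]; rewrite nth_uniq ?size_w // => /eqP /val_inj.
exists (perm f_inj); rewrite -[RHS](mkseq_nth 0) size_w /mkseq.
by rewrite -val_enum_ord -map_comp; apply: eq_map => i; rewrite /= permE.
Qed.

(** * The recurrence *)

Section Recurrences.
Variables (R : comNzRingType) (p q u v s t : R).
Local Notation weight := (weight p q v s t).
Local Notation F := (Fcoef p q u v s t).
Local Open Scope ring_scope.

Lemma Fcoef_avoiders n : F n = \sum_(w <- avoiders n) u ^+ lrmax w * weight w.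
Proof.
have avoids_E (sg : 'S_n) :
    avoids (pword sg) [:: 0; 1; 2] && avoids (pword sg) [:: 0; 2; 1] =
    ~~ contains_1xx (pword sg).
  by rewrite /avoids -negb_or contains_123_132 // pword_uniq.
have avoiders_E : perm_eq (avoiders n)
    [seq pword sg | sg <- index_enum 'S_n & ~~ contains_1xx (pword sg)].
  apply: uniq_perm (avoiders_uniq n) _ _ => [|w].
    by rewrite map_inj_uniq ?filter_uniq ?index_enum_uniq //; apply: pword_inj.
  apply/idP/mapP => [w_av | [sg]].
    have [sg sg_w] := pword_onto (avoiders_perm w_av).
    exists sg => //; rewrite mem_filter mem_index_enum andbT sg_w.
    by rewrite -(mem_avoiders (avoiders_perm w_av)).
  rewrite mem_filter mem_index_enum andbT => sg_av ->.
  by rewrite mem_avoiders ?pword_perm.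
rewrite /Fcoef (eq_bigl _ _ avoids_E) (perm_big _ avoiders_E) big_map big_filter.
by apply: eq_bigr => sg _; rewrite /weight; ring.
Qed.

Definition max_first k := \sum_(w <- avoiders k.+1) weight (k.+1 :: w).
Definition submax_first k := \sum_(w <- avoiders k.+1) weight (k :: map (swap_succ k) w).

Lemma Fcoef_SS k : F k.+2 = u * max_first k + u ^+ 2 * submax_first k.
Proof.
rewrite Fcoef_avoiders avoiders_SS big_cat !big_map !big_distrr /=.
congr (_ + _); apply: eq_big_seq => w w_av.
  by rewrite lrmax_cons_max ?avoiders_lt.
by rewrite lrmax_cons_submax ?avoiders_perm.
Qed.

Lemma max_first_S k :
  max_first k.+1 = q * v * s * max_first k + q * v * s * submax_first k.
Proof.
have -> : max_first k.+1 = \sum_(w <- avoiders k.+2) q * v * s * weight w.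
  rewrite /max_first; apply: eq_big_seq => w w_av.
  by rewrite weight_cons_max ?(avoiders_lt w_av) ?(avoiders_nonempty w_av).
by rewrite -mulrDr -big_distrr avoiders_SS big_cat !big_map.
Qed.

Lemma submax_first_S k :
  submax_first k.+1 = p * max_first k + q * s * submax_first k.
Proof.
have -> : submax_first k.+1 =
    \sum_(w <- avoiders k.+2) (if head 0%N w == k.+1 then p else q * s) * weight w.
  rewrite /submax_first; apply: eq_big_seq => w w_av.
  by rewrite weight_cons_submax ?avoiders_perm // expr0 mulr1.
rewrite avoiders_SS big_cat !big_map !big_distrr /= eqxx.
by congr (_ + _); apply: eq_bigr => w _; rewrite ifN // neq_ltn ltnSn.
Qed.

Lemma Fcoef0 : F 0 = 1.
Proof.
rewrite Fcoef_avoiders big_seq1 /weight asc_rises des_rises lrmax_records.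
by rewrite rlmax_records lrmin_records rlmin_records /= !expr0 !mulr1.
Qed.

Lemma Fcoef1 : F 1 = u * v * s * t.
Proof.
rewrite Fcoef_avoiders big_seq1 /weight asc_rises des_rises lrmax_records.
by rewrite rlmax_records lrmin_records rlmin_records /=; ring.
Qed.

Lemma max_first0 : max_first 0 = q * v ^+ 2 * s ^+ 2 * t.
Proof.
rewrite /max_first big_seq1 /weight asc_rises des_rises.
by rewrite rlmax_records lrmin_records rlmin_records /=; ring.
Qed.

Lemma submax_first0 : submax_first 0 = p * v * s * t ^+ 2.
Proof.
rewrite /submax_first big_seq1 /weight asc_rises des_rises.
by rewrite rlmax_records lrmin_records rlmin_records /=; ring.
Qed.

End Recurrences.

Local Open Scope ring_scope.

Lemma linear_combination_recurrence (R : comPzRingType) (a b f : nat -> R)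
    (al be ga de x y : R) :
  (forall k, a k.+1 = al * a k + be * b k) ->
  (forall k, b k.+1 = ga * a k + de * b k) ->
  (forall k, f k = x * a k + y * b k) ->
  forall k, f k.+2 = (al + de) * f k.+1 - (al * de - be * ga) * f k.
Proof.
by move=> a_S b_S f_E k; rewrite !f_E (a_S k.+1) (b_S k.+1) !a_S !b_S; ring.
Qed.

Lemma convolution_seq3 (R : comPzRingType) (d0 d1 d2 : R) (f : nat -> R) n :
  (1 < n)%N ->
  \sum_(k < n.+1) [:: d0; d1; d2]`_k * f (n - k)%N =
    d0 * f n + d1 * f n.-1 + d2 * f n.-2.
Proof.
case: n => [|[|n]] // _; rewrite !big_ord_recl big1 ?addr0 => [|i _].
  by rewrite /= !subSS !subn0 addrA.
by rewrite nth_default ?mul0r.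
Qed.

Theorem theorem3 (R : comRingType) (p q u v s t : R) (n : nat) :
  let N : {poly R} :=
    1 + (q ^+ 2 * s ^+ 2 * v)%:P * 'X ^+ 2
      + (s * t * u * v)%:P * 'X * (1 + (p * t * u)%:P * 'X)
      - (q * s)%:P * 'X *
          (1 + (p * u * v ^+ 2 * s * t * (t - 1) * (u - 1))%:P * 'X ^+ 2
             + v%:P * (1 + p%:P * 'X + (s * t * u)%:P * 'X)) in
  let D : {poly R} :=
    1 + (q ^+ 2 * s ^+ 2 * v)%:P * 'X ^+ 2
      - (q * s)%:P * 'X * (1 + v%:P + (p * v)%:P * 'X) in
  \sum_(k < n.+1) D`_k * Fcoef p q u v s t (n - k) = N`_n.
Proof.
move=> N D.
pose tr := q * s * (1 + v); pose det := q ^+ 2 * s ^+ 2 * v - p * q * s * v.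
have coefD k : D`_k = [:: 1; - tr; det]`_k.
  rewrite /D /tr /det -!mulrA !coefE.
  by case: k => [|[|[|k]]]; rewrite /= ?nth_nil; ring.
have coefN k : N`_k = [:: 1; s * t * u * v - tr;
    q ^+ 2 * s ^+ 2 * v + p * s * t ^+ 2 * u ^+ 2 * v - p * q * s * v
      - q * s ^+ 2 * t * u * v;
    - (p * q * s ^+ 2 * t * u * v ^+ 2 * (t - 1) * (u - 1))]`_k.
  rewrite /N /tr -!mulrA !coefE.
  by case: k => [|[|[|[|k]]]]; rewrite /= ?nth_nil; ring.
rewrite coefN; under eq_bigr => k _ do rewrite coefD.
have F_rec := linear_combination_recurrence (max_first_S p q v s t)
  (submax_first_S p q v s t) (Fcoef_SS p q u v s t).
case: n => [|[|n]].
- by rewrite big_ord_recl big_ord0 /= Fcoef0; ring.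
- by rewrite !big_ord_recl big_ord0 /= Fcoef0 Fcoef1; ring.
rewrite convolution_seq3 //=; case: n => [|[|n]] /=.
- by rewrite Fcoef_SS max_first0 submax_first0 Fcoef1 Fcoef0 /tr /det; ring.
- rewrite !Fcoef_SS max_first_S submax_first_S max_first0 submax_first0 Fcoef1.
  by rewrite /tr /det; ring.
by rewrite F_rec nth_nil /tr /det; ring.
Qed.
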